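(* For every instance of the single-processor carbon-aware scheduling problem that admits a valid schedule, there exists an optimal (minimum carbon cost) valid schedule that is an $\mathcal{E}$-schedule, i.e., in which every block starts or ends at a time belonging to $\mathcal{E}=\{b_1=0,e_1=b_2,\dots,e_{J-1}=b_J,e_J=T\}$.
   Context: Single-processor carbon-aware scheduling problem. All quantities are nonnegative integers. One processor must execute tasks $v_1,\dots,v_n$ in this fixed order; task $v_i$ has duration $\omega(v_i)\ge 1$. The horizon $[0,T)$ is partitioned into $J$ consecutive intervals $I_j=[b_j,e_j)$, $1\le j\le J$, with $b_1=0$, $e_j=b_{j+1}$, $e_J=T$, each with a constant green power budget $\mathcal{G}_j\ge 0$ per time unit. The processor consumes idle power $P_{\mathrm{idle}}$ at every time unit, plus working power $P_{\mathrm{work}}$ at every time unit during which it executes a task. A (valid) schedule is an assignment of integer start times $\sigma(v_i)$ with $\sigma(v_1)\ge 0$, $\sigma(v_{i+1})\ge \sigma(v_i)+\omega(v_i)$ for $1\le i<n$, and $\sigma(v_n)+\omega(v_n)\le T$. The processor is active at integer time $t$ iff $\sigma(v_i)\le t<\sigma(v_i)+\omega(v_i)$ for some $i$; the power at $t$ is $\mathcal{P}(t)=P_{\mathrm{idle}}+P_{\mathrm{work}}$ if active and $P_{\mathrm{idle}}$ otherwise. The total carbon cost is $\mathcal{CC}=\sum_{t=0}^{T-1}\max(\mathcal{P}(t)-\mathcal{G}_{j(t)},0)$, where $t\in I_{j(t)}$. A block of a schedule is a maximal set of consecutive tasks $v_r,\dots,v_s$ ($r\le s$) executed without idle time between them,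 i.e., $\sigma(v_{i+1})=\sigma(v_i)+\omega(v_i)$ for $r\le i<s$, with idle time (or the horizon boundary) immediately before $v_r$ and immediately after $v_s$. A block starts at $\sigma(v_r)$ and ends at $\sigma(v_s)+\omega(v_s)$. *)

From mathcomp Require Import all_boot.
Set Implicit Arguments. Unset Strict Implicit. Unset Printing Implicit Defensive.

(* Tasks are indexed 0..n-1 (v_{i+1} is task i), durations w : nat -> nat.
   Intervals are indexed 0..J-1: I_j = [b j, b (j+1)), so b 0 = 0 and b J = T;
   G j is the green power budget of interval j.
   A schedule is sig : nat -> nat (sig i = start time of task i; values for
   i >= n are irrelevant). *)

Definition instance_ok (n : nat) (w : nat -> nat) (J : nat) (b : nat -> nat)
    (T : nat) : Prop :=
  (forall i, i < n -> 1 <= w i) /\ 1 <= J /\ b 0 = 0 /\ b J = T /\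
  (forall j, j < J -> b j < b j.+1).

Definition valid (n : nat) (w : nat -> nat) (T : nat) (sig : nat -> nat) : Prop :=
  (forall i, i.+1 < n -> sig i + w i <= sig i.+1) /\
  (0 < n -> sig n.-1 + w n.-1 <= T).

Definition active (n : nat) (w : nat -> nat) (sig : nat -> nat) (t : nat) : bool :=
  has (fun i => (sig i <= t) && (t < sig i + w i)) (iota 0 n).

Definition power (n : nat) (w : nat -> nat) (Pidle Pwork : nat)
    (sig : nat -> nat) (t : nat) : nat :=
  if active n w sig t then Pidle + Pwork else Pidle.

(* total carbon cost: sum over t in [0,T) of max(P(t) - G_{j(t)}, 0),
   grouped by interval (truncated subtraction = max(_,0)) *)
Definition carbon_cost (n : nat) (w : nat -> nat) (J : nat) (b : nat -> nat)
    (G : nat -> nat) (Pidle Pwork : nat) (sig : nat -> nat) : nat :=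
  \sum_(j < J) \sum_(b j <= t < b j.+1) (power n w Pidle Pwork sig t - G j).

Definition is_block (n : nat) (w : nat -> nat) (sig : nat -> nat) (r s : nat) : Prop :=
  r <= s /\ s < n /\
  (forall i, r <= i -> i < s -> sig i.+1 = sig i + w i) /\
  (r = 0 \/ sig r.-1 + w r.-1 < sig r) /\
  (s = n.-1 \/ sig s + w s < sig s.+1).

Definition in_E (J : nat) (b : nat -> nat) (x : nat) : Prop :=
  exists j, j <= J /\ x = b j.

Definition E_schedule (n : nat) (w : nat -> nat) (J : nat) (b : nat -> nat)
    (sig : nat -> nat) : Prop :=
  forall r s, is_block n w sig r s ->
    in_E J b (sig r) \/ in_E J b (sig s + w s).

(* Among the optimal schedules take one whose sum of start times is minimal.
   Suppose a block occupying [x, y) had neither endpoint in E.  Then x - 1 and x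
   lie in the same interval, and so do y - 1 and y.  Shifting the block one unit
   to the left switches slot x - 1 on and slot y - 1 off; shifting it one unit
   to the right switches slot x off and slot y on.  Both shifts keep the schedule
   valid, and since the slots exchanged lie in the same intervals, the two cost
   changes are opposite: the costs of the shifted schedules add up to twice the
   optimum.  Hence both are optimal, and the left shift has a smaller sum of
   start times, a contradiction. *)

From mathcomp Require Import all_boot zify.
From Stdlib Require Import Classical.
Set Implicit Arguments. Unset Strict Implicit.

Lemma ex_argmin (X : Type) (P : X -> Prop) (f : X -> nat) :
  (exists x, P x) -> exists x, P x /\ forall y, P y -> f x <= f y.
Proof.
move=> [x Px]; move: {2}(f x) (leqnn (f x)) => k.
elim: k x Px => [|k IH] x Px hk.
  by exists x; split=> // y _; lia.
case: (classic (exists y, P y /\ f y < f x)) => [[y [Py hy]]|hmin].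
  by apply: (IH y Py); lia.
exists x; split=> // y Py; rewrite leqNgt; apply/negP => hlt.
by apply: hmin; exists y.
Qed.

Lemma ltn_sum_ord (n k : nat) (f g : nat -> nat) : k < n ->
  (forall i, i < n -> f i <= g i) -> f k < g k ->
  \sum_(i < n) f i < \sum_(i < n) g i.
Proof.
move=> hk hfg hlt.
rewrite (bigD1 (Ordinal hk)) //= [X in _ < X](bigD1 (Ordinal hk)) //= -addSn.
by apply: leq_add => //; apply: leq_sum => i _; apply: hfg.
Qed.

Section Intervals.

Variables (J : nat) (b : nat -> nat).
Hypothesis b_incr : forall j, j < J -> b j < b j.+1.

Lemma interval_bound_mono i k : i <= k <= J -> b i <= b k.
Proof.
move=> /andP[hik hkJ].
have mono : {homo (fun j => b (minn j J)) : x y / x <= y}.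
  apply: homo_leq => [//|y x z|x]; first exact: leq_trans.
  case: (ltnP x J) => hx; last by rewrite !(minn_idPr _) //; lia.
  by rewrite !(minn_idPl _) //; apply: ltnW; apply: b_incr.
by have := mono _ _ hik; rewrite !(minn_idPl _) //; lia.
Qed.

Lemma sum_intervals_pick (F : nat -> nat) j1 t1 :
  j1 < J -> b j1 <= t1 < b j1.+1 ->
  \sum_(j < J) \sum_(b j <= t < b j.+1) (if t == t1 then F j else 0) = F j1.
Proof.
move=> hj1 ht1.
under eq_bigr => j _ do rewrite -big_mkcond /= (big_nat1_eq _ (fun=> F j)).
rewrite (bigD1 (Ordinal hj1)) //= ht1 big1 ?addn0 // => j hj.
have {}hj : val j != j1 by apply: contraNneq hj => h; apply/eqP/val_inj.
case: ifP => // /andP[h1 h2]; exfalso.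
case: (ltngtP (val j) j1) => [lt|gt|eq]; last by rewrite eq eqxx in hj.
- have /interval_bound_mono : j.+1 <= j1 <= J by rewrite lt ltnW.
  by lia.
- have /interval_bound_mono : j1.+1 <= j <= J by rewrite gt ltnW.
  by lia.
Qed.

Lemma interior_point x : b 0 = 0 -> x <= b J -> ~ in_E J b x ->
  exists2 j, j < J & b j < x < b j.+1.
Proof.
move=> hb0 hx notE; elim: J b_incr hx notE => [|J' IH] hb hx notE.
  by case: notE; exists 0; split => //; lia.
case: (ltnP x (b J')) => hxJ.
  have hb' j : j < J' -> b j < b j.+1 by move=> hj; apply: hb; lia.
  have notE' : ~ in_E J' b x.
    by move=> [j [hj hxj]]; apply: notE; exists j; split => //; lia.
  by have [j hj hxj] := IH hb' (ltnW hxJ) notE'; exists j => //; lia.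
exists J' => //; apply/andP; split.
  by rewrite ltn_neqAle hxJ andbT; apply/eqP => hx'; apply: notE; exists J'.
by rewrite ltn_neqAle hx andbT; apply/eqP => hx'; apply: notE; exists J'.+1.
Qed.

End Intervals.

Section ProfileCost.

Variables (J : nat) (b G : nat -> nat) (Pidle Pwork : nat).

Definition slot_cost (j : nat) (x : bool) : nat :=
  (if x then Pidle + Pwork else Pidle) - G j.

Definition profile_cost (a : nat -> bool) : nat :=
  \sum_(j < J) \sum_(b j <= t < b j.+1) slot_cost j (a t).

Lemma carbon_costE n w sig :
  carbon_cost n w J b G Pidle Pwork sig = profile_cost (active n w sig).
Proof. by []. Qed.

Lemma eq_profile_cost a a' : a =1 a' -> profile_cost a = profile_cost a'.
Proof.
by move=> eq_a; apply: eq_bigr => j _; apply: eq_bigr => t _; rewrite eq_a.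
Qed.

Definition set_at (a : nat -> bool) (t1 : nat) (x : bool) : nat -> bool :=
  fun t => if t == t1 then x else a t.

Lemma set_at_neq a t1 x t : t != t1 -> set_at a t1 x t = a t.
Proof. by rewrite /set_at => /negbTE ->. Qed.

Hypothesis b_incr : forall j, j < J -> b j < b j.+1.

Lemma profile_cost_set_at a t1 x j1 : j1 < J -> b j1 <= t1 < b j1.+1 ->
  profile_cost (set_at a t1 x) + slot_cost j1 (a t1) =
  profile_cost a + slot_cost j1 x.
Proof.
move=> hj1 ht1.
have pick y := sum_intervals_pick b_incr (fun j => slot_cost j y) hj1 ht1.
rewrite -(pick (a t1)) -(pick x) /profile_cost -!big_split.
apply: eq_bigr => j _; rewrite -!big_split; apply: eq_bigr => t _ /=.
by rewrite /set_at; case: eqP => [->|]; rewrite ?addn0 // addnC.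
Qed.

End ProfileCost.

Section Blocks.

Variables (n : nat) (w : nat -> nat).

Definition covers (sig : nat -> nat) (t i : nat) : bool :=
  (sig i <= t) && (t < sig i + w i).

Definition contiguous (sig : nat -> nat) (r s : nat) : Prop :=
  forall i, r <= i -> i < s -> sig i.+1 = sig i + w i.

Definition covered_outside (sig : nat -> nat) (r s t : nat) : bool :=
  has (covers sig t) (iota 0 r) || has (covers sig t) (iota s.+1 (n - s.+1)).

Definition shift_block (g sig : nat -> nat) (r s i : nat) : nat :=
  if r <= i <= s then g (sig i) else sig i.

Lemma contiguous_le sig r s : contiguous sig r s ->
  forall i, r <= i <= s -> sig r <= sig i.
Proof.
move=> hc; elim=> [|i IH] /andP[hri his].
  by rewrite (_ : r = 0) //; lia.
case: (eqVneq r i.+1) => [->//|hne].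
have := IH ltac:(apply/andP; lia).
by rewrite hc //; lia.
Qed.

Lemma has_covers_contiguous sig r s t : contiguous sig r s -> r <= s ->
  has (covers sig t) (iota r (s - r).+1) = (sig r <= t < sig s + w s).
Proof.
move=> hc; elim: s hc => [|s IH] hc hrs.
  by rewrite (_ : r = 0) /= ?orbF; [rewrite /covers|lia].
case: (eqVneq r s.+1) => [<-|hne]; first by rewrite subnn /= orbF.
have hrs' : r <= s by lia.
rewrite subSn // -addn1 iotaD has_cat IH //; last first.
  by move=> i hri his; apply: hc; lia.
have := contiguous_le hc (i := s) ltac:(apply/andP; lia).
rewrite /= orbF /covers (_ : r + (s - r).+1 = s.+1); last by lia.
by rewrite hc //; lia.
Qed.

Lemma active_contiguous sig r s t : contiguous sig r s -> r <= s < n ->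
  active n w sig t = covered_outside sig r s t || (sig r <= t < sig s + w s).
Proof.
move=> hc /andP[hrs hsn].
rewrite /active /covered_outside -/(covers sig t).
have -> : n = r + ((s - r).+1 + (n - s.+1)) by lia.
rewrite !iotaD !has_cat add0n has_covers_contiguous //.
have -> : r + (s - r).+1 = s.+1 by lia.
have -> : r + ((s - r).+1 + (n - s.+1)) - s.+1 = n - s.+1 by lia.
by case: (has _ (iota 0 r)); rewrite //= orbC.
Qed.

Lemma contiguous_shift_block g sig r s : contiguous sig r s ->
  (forall x y, sig r <= x -> g (x + y) = g x + y) ->
  contiguous (shift_block g sig r s) r s.
Proof.
move=> hc hg i hri his; rewrite /shift_block !ifT ?hc ?hg //;
  try by apply/andP; lia.
by apply: (contiguous_le hc); apply/andP; lia.
Qed.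

Lemma covered_outside_shift_block g sig r s :
  covered_outside (shift_block g sig r s) r s =1 covered_outside sig r s.
Proof.
move=> t; rewrite /covered_outside; congr (_ || _); apply: eq_in_has => i;
  rewrite mem_iota => hi; rewrite /covers /shift_block ifF //; lia.
Qed.

Lemma active_shift_block g sig r s t : contiguous sig r s -> r <= s < n ->
  (forall x y, sig r <= x -> g (x + y) = g x + y) ->
  active n w (shift_block g sig r s) t =
  covered_outside sig r s t || (g (sig r) <= t < g (sig s) + w s).
Proof.
move=> hc hrsn hg.
rewrite (active_contiguous _ (contiguous_shift_block hc hg) hrsn).
rewrite covered_outside_shift_block /shift_block.
by rewrite !ifT //; apply/andP; lia.
Qed.

End Blocks.

Section ValidSchedule.

Variables (n : nat) (w : nat -> nat) (T : nat) (sig : nat -> nat).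
Hypothesis sig_valid : valid n w T sig.

Lemma valid_end_le_start i k : i < k < n -> sig i + w i <= sig k.
Proof.
case: sig_valid => hv _; elim: k => [|k IH] /andP[hik hkn]; first by [].
case: (eqVneq i k) => [->|hne]; first exact: hv.
by have := IH ltac:(apply/andP; lia); have := hv k hkn; lia.
Qed.

Lemma valid_end_le_horizon i : i < n -> sig i + w i <= T.
Proof.
case: sig_valid => _ hT hi; case: (ltnP i n.-1) => hin; last first.
  by rewrite (_ : i = n.-1); [apply: hT|]; lia.
by have := valid_end_le_start (i := i) (k := n.-1); have := hT; lia.
Qed.

End ValidSchedule.

Section BlockShift.

Variables (n : nat) (w : nat -> nat) (J : nat) (b : nat -> nat) (T : nat).
Variables (sig : nat -> nat) (r s : nat).
Hypothesis inst : instance_ok n w J b T.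
Hypothesis sig_valid : valid n w T sig.
Hypothesis block : is_block n w sig r s.
Hypothesis start_notin_E : ~ in_E J b (sig r).
Hypothesis end_notin_E : ~ in_E J b (sig s + w s).

Let shift_left := shift_block predn sig r s.
Let shift_right := shift_block succn sig r s.

Lemma block_bounds : r <= s < n.
Proof. by case: block => hrs [hsn _]; rewrite hrs. Qed.

Lemma block_contiguous : contiguous w sig r s.
Proof. by case: block => _ [_ []]. Qed.

Lemma block_gap_before : 0 < r -> sig r.-1 + w r.-1 < sig r.
Proof. by case: block => _ [_ [_ [[->//|]]]]. Qed.

Lemma block_gap_after : s.+1 < n -> sig s + w s < sig s.+1.
Proof. by case: block => _ [hsn [_ [_ [hs|]]]] //; lia. Qed.

Lemma block_start_le i : r <= i <= s -> sig r <= sig i.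
Proof. exact: contiguous_le block_contiguous i. Qed.

Lemma block_start_lt_end : sig r < sig s + w s.
Proof.
have /andP[hrs hsn] := block_bounds; case: inst => hw _.
by have := block_start_le (i := s) ltac:(apply/andP; lia); have := hw s hsn; lia.
Qed.

Lemma block_start_pos : 0 < sig r.
Proof.
case: inst => _ [_ [hb0 _]]; rewrite lt0n; apply/eqP => h0.
by apply: start_notin_E; exists 0; rewrite hb0.
Qed.

Lemma block_end_lt_horizon : sig s + w s < T.
Proof.
case: inst => _ [_ [_ [hbJ _]]]; have /andP[_ hsn] := block_bounds.
rewrite ltn_neqAle (valid_end_le_horizon sig_valid) // andbT; apply/eqP => hT.
by apply: end_notin_E; exists J; rewrite hbJ.
Qed.

Lemma covered_outside_block t : (sig r).-1 <= t <= sig s + w s ->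
  covered_outside n w sig r s t = false.
Proof.
have /andP[hrs hsn] := block_bounds; move=> /andP[ht1 ht2].
apply/norP; split; apply/hasPn => i; rewrite mem_iota /covers => /andP[hi1 hi2].
- have hgap := block_gap_before ltac:(lia).
  have : sig i + w i <= sig r.-1 + w r.-1.
    case: (ltnP i r.-1) => hir; last by rewrite (_ : i = r.-1) //; lia.
    by have := valid_end_le_start sig_valid (i := i) (k := r.-1); lia.
  by lia.
- have hgap := block_gap_after ltac:(lia).
  have : sig s.+1 <= sig i.
    case: (ltnP s.+1 i) => hsi; last by rewrite (_ : i = s.+1) //; lia.
    by have := valid_end_le_start sig_valid (i := s.+1) (k := i); lia.
  by lia.
Qed.

Lemma active_near_block t : (sig r).-1 <= t <= sig s + w s ->
  active n w sig t = (sig r <= t < sig s + w s).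
Proof.
move=> ht; rewrite (active_contiguous _ block_contiguous block_bounds).
by rewrite covered_outside_block.
Qed.

Lemma valid_shift_left : valid n w T shift_left.
Proof.
have hS := block_start_pos; have /andP[hrs hsn] := block_bounds.
case: sig_valid => hv hT; rewrite /shift_left /shift_block; split; last first.
  by move=> hn; have := hT hn; case: ifP => _; lia.
move=> i hi; have := hv i hi.
case: ifP => hin; case: ifP => hin1.
- by have := block_start_le (i := i) ltac:(lia); lia.
- by lia.
- have e : r = i.+1 by lia.
  by have := block_gap_before ltac:(lia); rewrite e /=; lia.
- by [].
Qed.

Lemma valid_shift_right : valid n w T shift_right.
Proof.
have hE := block_end_lt_horizon; have /andP[hrs hsn] := block_bounds.
case: sig_valid => hv hT; rewrite /shift_right /shift_block; split; last first.
  move=> hn; have := hT hn; case: ifP => // hin.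
  by rewrite (_ : n.-1 = s); [lia|have := block_gap_after; lia].
move=> i hi; have := hv i hi.
case: ifP => hin; case: ifP => hin1.
- by lia.
- by have := block_gap_after; rewrite (_ : s = i); lia.
- by lia.
- by [].
Qed.

Lemma active_shift_left :
  active n w shift_left =1
  set_at (set_at (active n w sig) (sig r).-1 true) (sig s + w s).-1 false.
Proof.
have hS := block_start_pos; have hSE := block_start_lt_end.
have /andP[hrs _] := block_bounds.
have hSs := block_start_le (i := s) ltac:(lia).
have pred_add x y : sig r <= x -> (x + y).-1 = x.-1 + y by lia.
move=> t; rewrite /shift_left.
rewrite (active_shift_block _ block_contiguous block_bounds pred_add).
rewrite /set_at; case: eqP => [->|hE]; last case: eqP => [->|hS'].
- by rewrite covered_outside_block; lia.
- by rewrite covered_outside_block; lia.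
rewrite (active_contiguous _ block_contiguous block_bounds).
by congr (_ || _); move/eqP: hE; move/eqP: hS'; lia.
Qed.

Lemma active_shift_right :
  active n w shift_right =1
  set_at (set_at (active n w sig) (sig r) false) (sig s + w s) true.
Proof.
have hSE := block_start_lt_end.
move=> t; rewrite /shift_right.
rewrite (active_shift_block _ block_contiguous block_bounds) //.
rewrite /set_at; case: eqP => [->|hE]; last case: eqP => [->|hS'].
- by rewrite covered_outside_block; lia.
- by rewrite covered_outside_block; lia.
rewrite (active_contiguous _ block_contiguous block_bounds).
by congr (_ || _); move/eqP: hE; move/eqP: hS'; lia.
Qed.

Lemma start_sum_shift_left : \sum_(i < n) shift_left i < \sum_(i < n) sig i.
Proof.
have hS := block_start_pos; have /andP[hrs hsn] := block_bounds.
apply: (ltn_sum_ord (k := r)); rewrite /shift_left /shift_block; first lia.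
  by move=> i _; case: ifP => _; lia.
by rewrite ifT //; lia.
Qed.

Lemma carbon_cost_shifts G Pidle Pwork :
  let cost := carbon_cost n w J b G Pidle Pwork in
  cost shift_left + cost shift_right = 2 * cost sig.
Proof.
case: inst => _ [_ [hb0 [hbJ b_incr]]].
have hSE := block_start_lt_end; have hET := block_end_lt_horizon.
have [j1 hj1 hS] := interior_point b_incr (x := sig r) hb0 ltac:(lia) start_notin_E.
have [j2 hj2 hE] := interior_point b_incr (x := sig s + w s) hb0 ltac:(lia) end_notin_E.
rewrite /= !carbon_costE (eq_profile_cost _ _ _ _ _ active_shift_left).
rewrite (eq_profile_cost _ _ _ _ _ active_shift_right).
have set_cost := profile_cost_set_at G Pidle Pwork b_incr.
have := set_cost (active n w sig) (sig r).-1 true j1 hj1 ltac:(lia).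
have := set_cost (set_at (active n w sig) (sig r).-1 true) (sig s + w s).-1
  false j2 hj2 ltac:(lia).
have := set_cost (active n w sig) (sig r) false j1 hj1 ltac:(lia).
have := set_cost (set_at (active n w sig) (sig r) false) (sig s + w s)
  true j2 hj2 ltac:(lia).
have before_off : active n w sig (sig r).-1 = false.
  by rewrite active_near_block //; lia.
have first_on : active n w sig (sig r) = true.
  by rewrite active_near_block //; lia.
have last_on : active n w sig (sig s + w s).-1 = true.
  by rewrite active_near_block //; lia.
have after_off : active n w sig (sig s + w s) = false.
  by rewrite active_near_block //; lia.
by rewrite !set_at_neq ?before_off ?first_on ?last_on ?after_off; lia.
Qed.

End BlockShift.

Theorem lemma1 (n : nat) (w : nat -> nat) (J : nat) (b : nat -> nat) (T : nat)
    (G : nat -> nat) (Pidle Pwork : nat) :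
  instance_ok n w J b T ->
  (exists sig, valid n w T sig) ->
  exists sig, valid n w T sig /\
    (forall sig', valid n w T sig' ->
       carbon_cost n w J b G Pidle Pwork sig <= carbon_cost n w J b G Pidle Pwork sig') /\
    E_schedule n w J b sig.
Proof.
move=> inst ex_valid; set cost := carbon_cost n w J b G Pidle Pwork.
have [opt [opt_valid opt_min]] := ex_argmin cost ex_valid.
have [sig [[sig_valid sig_opt] sig_min]] :=
  ex_argmin (fun f : nat -> nat => \sum_(i < n) f i)
    (ex_intro (fun f => valid n w T f /\ cost f = cost opt) opt (conj opt_valid erefl)).
exists sig; split=> //; split=> [f f_valid|r s block].
  by rewrite sig_opt opt_min.
apply: NNPP => /not_or_and[start_notin_E end_notin_E].
have left_valid := valid_shift_left inst sig_valid block start_notin_E.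
have right_valid := valid_shift_right inst sig_valid block end_notin_E.
have shifts :=
  carbon_cost_shifts inst sig_valid block start_notin_E end_notin_E G Pidle Pwork.
rewrite /= -/cost in shifts.
have left_opt : cost (shift_block predn sig r s) = cost opt.
  by have := opt_min _ left_valid; have := opt_min _ right_valid; lia.
have := sig_min _ (conj left_valid left_opt).
by have := start_sum_shift_left inst block start_notin_E; lia.
Qed.
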